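(* Let $G=(V=[n],w)$ be a connected loopless weighted graph with $\tilde h_G<h_G$. Then there is a fractional partition $(\rho,\eta)$ of $V$ with $\|\rho\|=\|\eta\|$ (so both equal $\mathrm{vol}(G)/2$) and $\tilde h(G;\rho,\eta)=\tilde h_G$.
   Context: A weighted graph is a pair $(V,w)$ with $V=[n]$ and $w:V\times V\to[0,1]$ symmetric; it is loopless if $w(v,v)=0$ for all $v$. Put $\mathrm{vol}(v)=\sum_{u}w(u,v)$, $\mathrm{vol}(G)=\sum_v\mathrm{vol}(v)$, and for $S\subseteq V$, $\mathrm{vol}(S)=\sum_{v\in S}\mathrm{vol}(v)$. $G$ is connected if $\sum_{u\in S,v\notin S}w(u,v)>0$ for every $\emptyset\ne S\subsetneq V$. The Cheeger constant is $h_G=\min_{\emptyset\ne S\subsetneq V}\frac{\sum_{u\in S,v\notin S}w(u,v)}{\min\{\mathrm{vol}(S),\mathrm{vol}(V\setminus S)\}}$. A fractional partition of $V$ is a pair $(\rho,\eta)$ of functions $V\to[0,1]$ with $\rho+\eta\equiv1$; $\|\rho\|=\sum_u\rho(u)\mathrm{vol}(u)$, $\|\eta\|=\sum_u\eta(u)\mathrm{vol}(u)$. When both are nonzero, $\tilde h(G;\rho,\eta)=\frac{\sum_{u,v}\rho(u)\eta(v)w(u,v)}{\min\{\|\rho\|,\|\eta\|\}}$, and $\tilde h_G=\inf\tilde h(G;\rho,\eta)$ over all such fractional partitions. *)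

(* real numbers R. Vertices V = [n] are encoded as 0..n-1. *)
From Stdlib Require Import Reals Lra List.
Open Scope R_scope.

Fixpoint rsum (n : nat) (f : nat -> R) : R :=
  match n with
  | O => 0
  | S m => rsum m f + f m
  end.

Definition weighted_graph (n : nat) (w : nat -> nat -> R) : Prop :=
  (forall u v, (u < n)%nat -> (v < n)%nat -> 0 <= w u v <= 1) /\
  (forall u v, (u < n)%nat -> (v < n)%nat -> w u v = w v u).

Definition loopless (n : nat) (w : nat -> nat -> R) : Prop :=
  forall v, (v < n)%nat -> w v v = 0.

Definition vol (n : nat) (w : nat -> nat -> R) (v : nat) : R :=
  rsum n (fun u => w u v).

Definition volG (n : nat) (w : nat -> nat -> R) : R :=
  rsum n (fun v => vol n w v).

(* subsets of [n] as boolean predicates (only values on 0..n-1 matter) *)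
Definition volS (n : nat) (w : nat -> nat -> R) (S : nat -> bool) : R :=
  rsum n (fun v => if S v then vol n w v else 0).

Definition cut (n : nat) (w : nat -> nat -> R) (S : nat -> bool) : R :=
  rsum n (fun u => rsum n (fun v =>
    if S u then (if S v then 0 else w u v) else 0)).

Definition proper_nonempty (n : nat) (S : nat -> bool) : Prop :=
  (exists v, (v < n)%nat /\ S v = true) /\
  (exists v, (v < n)%nat /\ S v = false).

Definition connected (n : nat) (w : nat -> nat -> R) : Prop :=
  forall S, proper_nonempty n S -> cut n w S > 0.

Definition cheeger_ratio (n : nat) (w : nat -> nat -> R) (S : nat -> bool) : R :=
  cut n w S / Rmin (volS n w S) (volS n w (fun v => negb (S v))).

Definition is_cheeger_constant (n : nat) (w : nat -> nat -> R) (h : R) : Prop :=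
  (exists S, proper_nonempty n S /\ cheeger_ratio n w S = h) /\
  (forall S, proper_nonempty n S -> h <= cheeger_ratio n w S).

Definition fractional_partition (n : nat) (rho eta : nat -> R) : Prop :=
  forall u, (u < n)%nat -> 0 <= rho u <= 1 /\ 0 <= eta u <= 1 /\ rho u + eta u = 1.

Definition fnorm (n : nat) (w : nat -> nat -> R) (rho : nat -> R) : R :=
  rsum n (fun u => rho u * vol n w u).

Definition frac_cut (n : nat) (w : nat -> nat -> R) (rho eta : nat -> R) : R :=
  rsum n (fun u => rsum n (fun v => rho u * eta v * w u v)).

Definition htilde (n : nat) (w : nat -> nat -> R) (rho eta : nat -> R) : R :=
  frac_cut n w rho eta / Rmin (fnorm n w rho) (fnorm n w eta).

Definition admissible (n : nat) (w : nat -> nat -> R) (rho eta : nat -> R) : Prop :=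
  fractional_partition n rho eta /\ fnorm n w rho <> 0 /\ fnorm n w eta <> 0.

Definition is_frac_cheeger_constant (n : nat) (w : nat -> nat -> R) (t : R) : Prop :=
  (forall rho eta, admissible n w rho eta -> t <= htilde n w rho eta) /\
  (forall t', (forall rho eta, admissible n w rho eta -> t' <= htilde n w rho eta) -> t' <= t).

From Stdlib Require Import Reals Lra Lia Classical List.
From Coquelicot Require Import Compactness.
Open Scope R_scope.

(* Write F(rho) for the fractional cut between rho and 1 - rho and N(rho) for
   the norm of rho.  As w is loopless, F and N are affine in each single
   coordinate of rho.  Hence a fractional partition with N(rho) <= vol(G)/2 and
   F(rho) <= r N(rho) can be moved one coordinate at a time, pushing each
   coordinate to 0 or 1 or stopping when N(rho) reaches vol(G)/2, without
   breaking F <= r N.  If r < h_G the walk cannot end at a 0/1 vector, whose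
   support would be a set of Cheeger ratio at most r; so it ends at a balanced
   rho.  Thus h~_G is an infimum over balanced partitions, on which
   h~ = 2F/vol(G); these form a compact set on which F is continuous, so the
   infimum is attained. *)

Lemma rsum_ext n f g : (forall k, (k < n)%nat -> f k = g k) -> rsum n f = rsum n g.
Proof.
  induction n; simpl; intros H; auto.
  rewrite IHn, H by (auto; lia). reflexivity.
Qed.

Lemma rsum_lincomb n a b f g h : (forall k, (k < n)%nat -> f k = a * g k + b * h k) ->
  rsum n f = a * rsum n g + b * rsum n h.
Proof.
  induction n; simpl; intros H; [ring|].
  rewrite IHn, H by (auto; lia). ring.
Qed.

Lemma rsum_scal n c f : rsum n (fun k => c * f k) = c * rsum n f.
Proof. induction n; simpl; [ring|]. rewrite IHn. ring. Qed.

Lemma rsum_zero n f : (forall k, (k < n)%nat -> f k = 0) -> rsum n f = 0.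
Proof.
  intros H. rewrite (rsum_lincomb n 0 0 f f f); [ring|].
  intros k Hk. rewrite H by auto. ring.
Qed.

Lemma rsum_nonneg n f : (forall k, (k < n)%nat -> 0 <= f k) -> 0 <= rsum n f.
Proof.
  induction n; simpl; intros H; [lra|].
  assert (0 <= f n) by (apply H; lia).
  assert (0 <= rsum n f) by (apply IHn; intros; apply H; lia). lra.
Qed.

Lemma rsum_abs_le n f g h : (forall k, (k < n)%nat -> Rabs (f k - g k) <= h k) ->
  Rabs (rsum n f - rsum n g) <= rsum n h.
Proof.
  induction n; simpl; intros H.
  - rewrite Rminus_0_r, Rabs_R0. lra.
  - assert (Hn := H n ltac:(lia)).
    assert (IH : Rabs (rsum n f - rsum n g) <= rsum n h) by (apply IHn; intros; apply H; lia).
    replace (rsum n f + f n - (rsum n g + g n)) with ((rsum n f - rsum n g) + (f n - g n)) by ring.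
    eapply Rle_trans; [apply Rabs_triang | lra].
Qed.

Lemma rsum_indicator n k g : (k < n)%nat ->
  rsum n (fun u => if Nat.eqb u k then g u else 0) = g k.
Proof.
  induction n; simpl; intros H; [lia|].
  destruct (Nat.eqb n k) eqn:E.
  - apply Nat.eqb_eq in E; subst.
    rewrite rsum_zero; [ring|].
    intros j Hj. destruct (Nat.eqb j k) eqn:E2; auto. apply Nat.eqb_eq in E2; lia.
  - apply Nat.eqb_neq in E. rewrite IHn by lia. ring.
Qed.

Lemma rsum_swap n m f :
  rsum n (fun u => rsum m (fun v => f u v)) = rsum m (fun v => rsum n (fun u => f u v)).
Proof.
  induction n; simpl; [symmetry; apply rsum_zero; auto|].
  rewrite IHn. symmetry.
  rewrite (rsum_lincomb m 1 1 _ (fun v => rsum n (fun u => f u v)) (fun v => f n v)).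
  - ring.
  - intros; simpl; ring.
Qed.

Lemma list_pos_lower_bound {T} (l : list T) (P : T -> Prop) (g : T -> R) :
  (forall t, P t -> 0 < g t) -> exists c, 0 < c /\ forall t, In t l -> P t -> c <= g t.
Proof.
  intros H. induction l as [|a l IH].
  - exists 1. split; [lra|]. intros t [].
  - destruct IH as [c [Hc Hl]].
    destruct (classic (P a)) as [Pa|Pa].
    + exists (Rmin c (g a)). split; [apply Rmin_glb_lt; auto|].
      intros t [<-|Ht] Pt; [apply Rmin_r|].
      eapply Rle_trans; [apply Rmin_l | auto].
    + exists c. split; auto. intros t [<-|Ht] Pt; [contradiction | auto].
Qed.

Definition unit_cube (n : nat) (r : nat -> R) : Prop :=
  forall u, (u < n)%nat -> 0 <= r u <= 1.

Definition lipschitz_on_cube (n : nat) (f : (nat -> R) -> R) (K : R) : Prop :=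
  forall p q d, unit_cube n p -> unit_cube n q ->
    (forall u, (u < n)%nat -> Rabs (p u - q u) < d) -> Rabs (f p - f q) <= K * d.

Fixpoint of_Tn (n : nat) : Tn n R -> nat -> R :=
  match n return Tn n R -> nat -> R with
  | O => fun _ _ => 0
  | S m => fun x k => match k with O => fst x | S k' => of_Tn m (snd x) k' end
  end.

Fixpoint to_Tn (n : nat) (f : nat -> R) : Tn n R :=
  match n return Tn n R with
  | O => tt
  | S m => (f O, to_Tn m (fun k => f (S k)))
  end.

Lemma of_to_Tn n : forall f k, (k < n)%nat -> of_Tn n (to_Tn n f) k = f k.
Proof.
  induction n; intros f k Hk; [lia|].
  destruct k; simpl; auto. rewrite IHn; auto. lia.
Qed.

Lemma bounded_of_Tn n : forall f g x, bounded_n n (to_Tn n f) (to_Tn n g) x ->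
  forall k, (k < n)%nat -> f k <= of_Tn n x k <= g k.
Proof.
  induction n; intros f g x H k Hk; [lia|].
  destruct x as [x1 x2], H as [H1 H2], k; simpl; auto.
  apply (IHn (fun k => f (S k)) (fun k => g (S k))); auto. lia.
Qed.

Lemma bounded_to_Tn n : forall f g p, (forall k, (k < n)%nat -> f k <= p k <= g k) ->
  bounded_n n (to_Tn n f) (to_Tn n g) (to_Tn n p).
Proof.
  induction n; intros f g p H; simpl; auto.
  split; [apply H; lia|]. apply IHn. intros; apply H; lia.
Qed.

Lemma close_of_Tn n : forall d x t, close_n n d x t ->
  forall k, (k < n)%nat -> Rabs (of_Tn n x k - of_Tn n t k) < d.
Proof.
  induction n; intros d x t H k Hk; [lia|].
  destruct x as [x1 x2], t as [t1 t2], H as [H1 H2], k; simpl; auto. apply IHn; auto. lia.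
Qed.

(* Cousin's lemma for the unit cube, stated doubly negated as in Coquelicot. *)
Lemma unit_cube_gauge_cover n (delta : (nat -> R) -> R) :
  (forall t, unit_cube n t -> 0 < delta t) ->
  ~ ~ exists l : list (nat -> R), forall p, unit_cube n p ->
    exists t, In t l /\ unit_cube n t /\ forall u, (u < n)%nat -> Rabs (p u - t u) < delta t.
Proof.
  intros Hdelta Hno.
  set (a := to_Tn n (fun _ => 0)). set (b := to_Tn n (fun _ => 1)).
  assert (Hcube : forall x, bounded_n n a b x -> unit_cube n (of_Tn n x))
    by (intros x Hx u Hu; apply (bounded_of_Tn n _ _ x Hx u Hu)).
  set (gauge := fun x => match Rlt_dec 0 (delta (of_Tn n x)) with
                         | left P => mkposreal _ P
                         | right _ => mkposreal 1 Rlt_0_1 end).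
  assert (Hgauge : forall x, bounded_n n a b x -> pos (gauge x) = delta (of_Tn n x)).
  { intros x Hx. unfold gauge. destruct (Rlt_dec 0 _) as [P|P]; simpl; auto.
    exfalso. apply P, Hdelta, Hcube, Hx. }
  apply (compactness_list n a b gauge). intros [l Hl].
  apply Hno. exists (map (of_Tn n) l). intros p Hp.
  destruct (Hl (to_Tn n p)) as [t [Hin [Ht Hclose]]].
  { apply bounded_to_Tn. intros; apply Hp; auto. }
  exists (of_Tn n t). split; [apply in_map; auto|]. split; [auto|].
  intros u Hu. rewrite <- (of_to_Tn n p u Hu), <- Hgauge by auto.
  apply close_of_Tn; auto.
Qed.

(* The gauge at t is a fraction of the distance of t from the set where the
   conclusion holds: of F(t) - m0 on the level set, of |N(t) - c| off it. *)
Lemma lipschitz_inf_attained n (F N : (nat -> R) -> R) c m0 K1 K2 :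
  0 <= K1 -> 0 <= K2 -> lipschitz_on_cube n F K1 -> lipschitz_on_cube n N K2 ->
  (forall g, 0 < g -> exists p, unit_cube n p /\ N p = c /\ F p < m0 + g) ->
  exists p, unit_cube n p /\ N p = c /\ F p <= m0.
Proof.
  intros HK1 HK2 HF HN Happ.
  apply NNPP. intros Hno.
  assert (Habove : forall p, unit_cube n p -> N p = c -> m0 < F p).
  { intros p Hp Hc. apply Rnot_le_lt. intros Hle. apply Hno. eauto. }
  set (v := fun t => if Req_dec_T (N t) c then (F t - m0) / (2 * (K1 + 1))
                     else Rabs (N t - c) / (2 * (K2 + 1))).
  apply (unit_cube_gauge_cover n v).
  { intros t Ht. unfold v. destruct (Req_dec_T (N t) c) as [E|E].
    - assert (m0 < F t) by (apply Habove; auto). apply Rdiv_lt_0_compat; lra.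
    - apply Rdiv_lt_0_compat; [apply Rabs_pos_lt|]; lra. }
  intros [l Hl].
  destruct (list_pos_lower_bound l (fun t => unit_cube n t /\ N t = c)
              (fun t => (F t - m0) / 2)) as [g [Hg Hgl]].
  { intros t [Ht Hc]. assert (m0 < F t) by (apply Habove; auto). lra. }
  destruct (Happ g Hg) as [p [Hp [HNp HFp]]].
  destruct (Hl p Hp) as [t [Hin [Ht Hclose]]].
  assert (LF := HF p t _ Hp Ht Hclose). assert (LN := HN p t _ Hp Ht Hclose).
  unfold v in LF, LN. destruct (Req_dec_T (N t) c) as [E|E].
  - assert (g <= (F t - m0) / 2) by (apply Hgl; auto).
    assert (F t - F p <= Rabs (F p - F t)) by (rewrite Rabs_minus_sym; apply Rle_abs).
    assert (K1 * ((F t - m0) / (2 * (K1 + 1))) <= (F t - m0) / 2).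
    { apply (Rmult_le_reg_r (2 * (K1 + 1))); [lra|].
      assert (m0 < F t) by (apply Habove; auto).
      field_simplify; [nra | lra]. }
    lra.
  - rewrite HNp, Rabs_minus_sym in LN.
    assert (K2 * (Rabs (N t - c) / (2 * (K2 + 1))) < Rabs (N t - c)); [|lra].
    assert (0 < Rabs (N t - c)) by (apply Rabs_pos_lt; lra).
    apply (Rmult_lt_reg_r (2 * (K2 + 1))); [lra|].
    field_simplify; [nra | lra].
Qed.

Definition fcompl (r : nat -> R) : nat -> R := fun u => 1 - r u.

Definition frac_boundary n w (r : nat -> R) : R := frac_cut n w r (fcompl r).

Definition fupd (r : nat -> R) (k : nat) (x : R) : nat -> R :=
  fun u => if Nat.eqb u k then x else r u.

Definition binary_below (k : nat) (r : nat -> R) : Prop :=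
  forall u, (u < k)%nat -> r u = 0 \/ r u = 1.

Definition indicator (S : nat -> bool) : nat -> R := fun u => if S u then 1 else 0.

Lemma fupd_same r k : forall u, fupd r k (r k) u = r u.
Proof.
  intros u. unfold fupd. destruct (Nat.eqb u k) eqn:E; auto.
  apply Nat.eqb_eq in E; subst; auto.
Qed.

Lemma unit_cube_fupd n r k x : unit_cube n r -> 0 <= x <= 1 -> unit_cube n (fupd r k x).
Proof. intros H Hx u Hu. unfold fupd. destruct (Nat.eqb u k); auto. Qed.

(* F - r N is affine in x: move x to 0 if it has positive slope, otherwise
   towards 1 until N reaches H.  At x = 0, N0 > 0 follows from F0 >= 0. *)
Lemma affine_rounding_step F0 F1 N0 V r H x0 :
  0 <= V -> 0 <= x0 <= 1 -> 0 <= F0 -> 0 <= r ->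
  0 < N0 + x0 * V < H -> (1 - x0) * F0 + x0 * F1 <= r * (N0 + x0 * V) ->
  exists x, 0 <= x <= 1 /\ 0 < N0 + x * V <= H /\
    (1 - x) * F0 + x * F1 <= r * (N0 + x * V) /\
    (x = 0 \/ x = 1 \/ N0 + x * V = H).
Proof.
  intros HV Hx0 HF0 Hr HN HF.
  destruct (Rle_or_lt (F1 - F0 - r * V) 0) as [Hslope|Hslope].
  - destruct (Rle_or_lt (N0 + V) H) as [Hfull|Hfull].
    + exists 1. assert (0 <= (1 - x0) * V) by (apply Rmult_le_pos; lra).
      repeat split; try lra; nra.
    + assert (HV' : 0 < V) by nra.
      set (x := (H - N0) / V).
      assert (Hx : x * V = H - N0) by (unfold x; field; lra).
      assert (x0 <= x) by (apply (Rmult_le_reg_r V); nra).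
      assert (x <= 1) by (apply (Rmult_le_reg_r V); nra).
      exists x. repeat split; try lra; nra.
  - assert (Hend : F0 <= r * N0) by nra.
    assert (0 < N0).
    { destruct (Req_dec x0 0) as [E|E]; [subst; lra|].
      assert (F0 - r * N0 < 0) by nra. nra. }
    exists 0. repeat split; nra.
Qed.

Section WeightedGraph.

Variables (n : nat) (w : nat -> nat -> R).
Hypothesis Hw : weighted_graph n w.
Hypothesis Hl : loopless n w.

Lemma fnorm_ext r s : (forall u, (u < n)%nat -> r u = s u) -> fnorm n w r = fnorm n w s.
Proof. intros H. apply rsum_ext. intros. rewrite H; auto. Qed.

Lemma frac_cut_ext r s r' s' : (forall u, (u < n)%nat -> r u = r' u) ->
  (forall u, (u < n)%nat -> s u = s' u) -> frac_cut n w r s = frac_cut n w r' s'.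
Proof.
  intros H1 H2. apply rsum_ext. intros. apply rsum_ext. intros. rewrite H1, H2; auto.
Qed.

Lemma frac_boundary_ext r s : (forall u, (u < n)%nat -> r u = s u) ->
  frac_boundary n w r = frac_boundary n w s.
Proof. intros H. apply frac_cut_ext; intros; unfold fcompl; rewrite H; auto. Qed.

Lemma fnorm_fcompl r : fnorm n w (fcompl r) = volG n w - fnorm n w r.
Proof.
  unfold fnorm, volG.
  rewrite (rsum_lincomb n 1 (-1) _ (fun u => vol n w u) (fun u => r u * vol n w u)).
  - ring.
  - intros; unfold fcompl; ring.
Qed.

Lemma fnorm_fupd r k x : (k < n)%nat ->
  fnorm n w (fupd r k x) = fnorm n w (fupd r k 0) + x * vol n w k.
Proof.
  intros Hk. unfold fnorm. rewrite <- (rsum_indicator n k (vol n w)) by auto.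
  rewrite (rsum_lincomb n 1 x _ (fun u => fupd r k 0 u * vol n w u)
             (fun u => if Nat.eqb u k then vol n w u else 0)); [ring|].
  intros u Hu. unfold fupd. destruct (Nat.eqb u k); ring.
Qed.

Lemma frac_boundary_indicator S : frac_boundary n w (indicator S) = cut n w S.
Proof.
  apply rsum_ext. intros u Hu. apply rsum_ext. intros v Hv.
  unfold indicator, fcompl. destruct (S u), (S v); ring.
Qed.

Lemma fnorm_indicator S : fnorm n w (indicator S) = volS n w S.
Proof. apply rsum_ext. intros u Hu. unfold indicator. destruct (S u); ring. Qed.

Lemma volS_negb S : volS n w (fun v => negb (S v)) = volG n w - volS n w S.
Proof.
  unfold volS, volG.
  rewrite (rsum_lincomb n 1 (-1) _ (fun u => vol n w u)
             (fun u => if S u then vol n w u else 0)); [ring|].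
  intros u Hu. destruct (S u); simpl; ring.
Qed.

Lemma frac_boundary_fupd r k x : (k < n)%nat ->
  frac_boundary n w (fupd r k x) =
  (1 - x) * frac_boundary n w (fupd r k 0) + x * frac_boundary n w (fupd r k 1).
Proof.
  intros Hk. apply rsum_lincomb. intros u Hu. apply rsum_lincomb. intros v Hv.
  unfold fupd, fcompl. destruct (Nat.eqb u k) eqn:E1, (Nat.eqb v k) eqn:E2; try ring.
  apply Nat.eqb_eq in E1, E2; subst. rewrite Hl by auto. ring.
Qed.

Lemma vol_nonneg v : (v < n)%nat -> 0 <= vol n w v.
Proof. intros Hv. apply rsum_nonneg. intros. apply Hw; auto. Qed.

Lemma fnorm_nonneg r : unit_cube n r -> 0 <= fnorm n w r.
Proof.
  intros Hr. apply rsum_nonneg. intros.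
  apply Rmult_le_pos; [apply Hr | apply vol_nonneg]; auto.
Qed.

Lemma frac_cut_nonneg r s : (forall u, (u < n)%nat -> 0 <= r u) ->
  (forall u, (u < n)%nat -> 0 <= s u) -> 0 <= frac_cut n w r s.
Proof.
  intros Hr Hs. apply rsum_nonneg. intros. apply rsum_nonneg. intros.
  repeat apply Rmult_le_pos; auto. apply Hw; auto.
Qed.

Lemma frac_boundary_nonneg r : unit_cube n r -> 0 <= frac_boundary n w r.
Proof.
  intros Hr. apply frac_cut_nonneg; intros u Hu; unfold fcompl;
    specialize (Hr u Hu); lra.
Qed.

Lemma frac_cut_sym r s : frac_cut n w r s = frac_cut n w s r.
Proof.
  unfold frac_cut. rewrite rsum_swap. apply rsum_ext. intros. apply rsum_ext. intros.
  rewrite (proj2 Hw) by auto. ring.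
Qed.

Lemma frac_boundary_lipschitz : lipschitz_on_cube n (frac_boundary n w) (2 * volG n w).
Proof.
  intros p q d Hp Hq Hd. unfold frac_boundary, frac_cut, fcompl.
  eapply Rle_trans.
  { apply (rsum_abs_le n _ _ (fun u => rsum n (fun v => (2 * d) * w u v))).
    intros u Hu. apply rsum_abs_le. intros v Hv.
    destruct (Hp u Hu), (Hp v Hv), (Hq u Hu), (Hq v Hv), (proj1 Hw u v Hu Hv).
    destruct (Rabs_def2 _ _ (Hd u Hu)), (Rabs_def2 _ _ (Hd v Hv)).
    apply Rabs_le.
    replace (p u * (1 - p v) * w u v - q u * (1 - q v) * w u v) with
      (w u v * ((p u - q u) * (1 - p v) - q u * (p v - q v))) by ring.
    assert (- d <= (p u - q u) * (1 - p v) <= d) by nra.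
    assert (- d <= q u * (p v - q v) <= d) by nra.
    split; nra. }
  right. replace (volG n w) with (rsum n (fun u => rsum n (fun v => w u v)))
    by (unfold volG, vol; apply rsum_swap).
  rewrite (rsum_ext _ _ (fun u => (2 * d) * rsum n (fun v => w u v))).
  - rewrite rsum_scal. ring.
  - intros. apply rsum_scal.
Qed.

Lemma fnorm_lipschitz : lipschitz_on_cube n (fnorm n w) (volG n w).
Proof.
  intros p q d Hp Hq Hd. unfold fnorm, volG.
  eapply Rle_trans.
  { apply (rsum_abs_le n _ _ (fun u => d * vol n w u)).
    intros u Hu. replace (p u * vol n w u - q u * vol n w u) with ((p u - q u) * vol n w u) by ring.
    rewrite Rabs_mult, (Rabs_right (vol n w u)) by (apply Rle_ge, vol_nonneg; auto).
    apply Rmult_le_compat_r; [apply vol_nonneg; auto | left; auto]. }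
  right. rewrite rsum_scal. apply Rmult_comm.
Qed.


Definition below_ratio (r : R) (p : nat -> R) : Prop :=
  unit_cube n p /\ 0 < fnorm n w p <= volG n w / 2 /\
  frac_boundary n w p <= r * fnorm n w p.

Lemma binary_below_fupd k p x : binary_below k p -> x = 0 \/ x = 1 ->
  binary_below (S k) (fupd p k x).
Proof.
  intros Hp Hx u Hu. unfold fupd. destruct (Nat.eqb u k) eqn:E; auto.
  apply Nat.eqb_neq in E. apply Hp. lia.
Qed.

Lemma below_ratio_step r p k : 0 <= r -> below_ratio r p -> fnorm n w p < volG n w / 2 ->
  (k < n)%nat -> binary_below k p ->
  exists q, below_ratio r q /\ (fnorm n w q = volG n w / 2 \/ binary_below (S k) q).
Proof.
  intros Hr (Hp & HN & HF) Hhalf Hk Hbin.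
  assert (Hpk : forall u, (u < n)%nat -> p u = fupd p k (p k) u)
    by (intros; symmetry; apply fupd_same).
  rewrite (fnorm_ext _ _ Hpk), fnorm_fupd in HN, Hhalf, HF by auto.
  rewrite (frac_boundary_ext _ _ Hpk), frac_boundary_fupd in HF by auto.
  destruct (affine_rounding_step (frac_boundary n w (fupd p k 0))
              (frac_boundary n w (fupd p k 1)) (fnorm n w (fupd p k 0)) (vol n w k)
              r (volG n w / 2) (p k)) as (x & Hx & HNx & HFx & Hend); auto.
  - apply vol_nonneg; auto.
  - apply frac_boundary_nonneg, unit_cube_fupd; auto; lra.
  - lra.
  - exists (fupd p k x). unfold below_ratio.
    rewrite fnorm_fupd, frac_boundary_fupd by auto.
    split; [split; [apply unit_cube_fupd; auto | auto] |].
    destruct Hend as [Hx0 | [Hx1 | Hbal]]; [right | right | left; auto];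
      apply binary_below_fupd; auto.
Qed.

Lemma below_ratio_round r p : 0 <= r -> below_ratio r p ->
  exists q, below_ratio r q /\ (fnorm n w q = volG n w / 2 \/ binary_below n q).
Proof.
  intros Hr Hp.
  assert (Hiter : forall k, (k <= n)%nat -> exists q, below_ratio r q /\
                    (fnorm n w q = volG n w / 2 \/ binary_below k q)).
  { induction k as [|k IH]; intros Hk.
    - exists p. split; auto. right. intros u Hu; lia.
    - destruct IH as [q [Hq [Hbal | Hbin]]]; [lia | exists q; auto |].
      destruct (Req_dec (fnorm n w q) (volG n w / 2)) as [E | E]; [exists q; auto |].
      apply (below_ratio_step r q k); auto. destruct Hq as (_ & ? & _); lra. }
  apply Hiter; auto.
Qed.

Lemma cheeger_ratio_binary r p : below_ratio r p -> binary_below n p ->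
  exists A, proper_nonempty n A /\ cheeger_ratio n w A <= r.
Proof.
  intros (Hp & HN & HF) Hbin.
  set (A := fun u => if Req_dec_T (p u) 1 then true else false).
  assert (Hind : forall u, (u < n)%nat -> p u = indicator A u).
  { intros u Hu. unfold indicator, A. destruct (Req_dec_T (p u) 1); auto.
    destruct (Hbin u Hu); auto; contradiction. }
  rewrite (frac_boundary_ext _ _ Hind), frac_boundary_indicator in HF.
  rewrite (fnorm_ext _ _ Hind), fnorm_indicator in HN, HF.
  exists A. split; [split|].
  - apply NNPP. intros Hno. assert (volS n w A = 0); [|lra].
    apply rsum_zero. intros u Hu. destruct (A u) eqn:E; auto. exfalso; eauto.
  - apply NNPP. intros Hno. assert (volS n w (fun v => negb (A v)) = 0).
    { apply rsum_zero. intros u Hu. destruct (A u) eqn:E; auto. exfalso; eauto. }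
    rewrite volS_negb in H. lra.
  - unfold cheeger_ratio. rewrite volS_negb, Rmin_left by lra.
    apply (Rmult_le_reg_r (volS n w A)); [lra|].
    unfold Rdiv. rewrite Rmult_assoc, Rinv_l by lra. lra.
Qed.

Lemma below_ratio_balance h r p :
  (forall A, proper_nonempty n A -> h <= cheeger_ratio n w A) -> 0 <= r -> r < h ->
  below_ratio r p ->
  exists q, unit_cube n q /\ fnorm n w q = volG n w / 2 /\
    frac_boundary n w q <= r * (volG n w / 2).
Proof.
  intros Hh Hr Hrh Hp.
  destruct (below_ratio_round r p Hr Hp) as [q [Hq [Hbal | Hbin]]].
  - destruct Hq as (Hq & _ & HF). exists q. rewrite <- Hbal. auto.
  - destruct (cheeger_ratio_binary r q Hq Hbin) as (A & HA & Hle).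
    specialize (Hh A HA). lra.
Qed.

End WeightedGraph.

Section FractionalCheeger.

Variables (n : nat) (w : nat -> nat -> R).
Hypothesis Hw : weighted_graph n w.
Hypothesis Hl : loopless n w.

Lemma admissible_fcompl rho eta : admissible n w rho eta ->
  unit_cube n rho /\ forall u, (u < n)%nat -> eta u = fcompl rho u.
Proof.
  intros [Hfp _]. split.
  - intros u Hu. apply Hfp; auto.
  - intros u Hu. destruct (Hfp u Hu) as (_ & _ & E). unfold fcompl. lra.
Qed.

Lemma admissible_fnorm rho eta : admissible n w rho eta ->
  fnorm n w eta = volG n w - fnorm n w rho /\ 0 < fnorm n w rho /\ 0 < fnorm n w eta.
Proof.
  intros Ha. destruct (admissible_fcompl rho eta Ha) as [Hrho Heta].
  destruct Ha as (Hfp & Hn1 & Hn2).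
  assert (E : fnorm n w eta = volG n w - fnorm n w rho)
    by (rewrite (fnorm_ext n w _ _ Heta); apply fnorm_fcompl).
  assert (0 <= fnorm n w rho) by (apply fnorm_nonneg; auto).
  assert (0 <= fnorm n w eta).
  { apply fnorm_nonneg; auto. intros u Hu. apply Hfp; auto. }
  repeat split; auto; lra.
Qed.

Lemma volG_pos_of_admissible rho eta : admissible n w rho eta -> 0 < volG n w.
Proof. intros Ha. destruct (admissible_fnorm rho eta Ha) as (E & P1 & P2). lra. Qed.

Lemma admissible_sym rho eta : admissible n w rho eta -> admissible n w eta rho.
Proof.
  intros (Hfp & H1 & H2). split; [|auto].
  intros u Hu. destruct (Hfp u Hu) as (? & ? & ?). repeat split; lra.
Qed.

Lemma htilde_sym rho eta : htilde n w rho eta = htilde n w eta rho.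
Proof. unfold htilde. rewrite frac_cut_sym, Rmin_comm by auto. reflexivity. Qed.

Lemma admissible_balance_small_side h rho eta :
  (forall A, proper_nonempty n A -> h <= cheeger_ratio n w A) ->
  admissible n w rho eta -> fnorm n w rho <= volG n w / 2 -> htilde n w rho eta < h ->
  exists q, unit_cube n q /\ fnorm n w q = volG n w / 2 /\
    frac_boundary n w q <= htilde n w rho eta * (volG n w / 2).
Proof.
  intros Hh Ha Hsmall Hlt.
  destruct (admissible_fcompl rho eta Ha) as [Hrho Heta].
  destruct (admissible_fnorm rho eta Ha) as (E & Prho & Peta).
  assert (Hht : htilde n w rho eta = frac_boundary n w rho / fnorm n w rho).
  { unfold htilde. rewrite Rmin_left by lra.
    rewrite (frac_cut_ext n w rho eta rho (fcompl rho)); auto. }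
  apply (below_ratio_balance n w Hw Hl h _ rho); auto.
  - rewrite Hht. unfold Rdiv.
    apply Rmult_le_pos; [apply frac_boundary_nonneg; auto |].
    left. apply Rinv_0_lt_compat. lra.
  - split; [auto | split; [lra|]].
    rewrite Hht. right. field. lra.
Qed.

Lemma admissible_balance h rho eta :
  (forall A, proper_nonempty n A -> h <= cheeger_ratio n w A) ->
  admissible n w rho eta -> htilde n w rho eta < h ->
  exists q, unit_cube n q /\ fnorm n w q = volG n w / 2 /\
    frac_boundary n w q <= htilde n w rho eta * (volG n w / 2).
Proof.
  intros Hh Ha Hlt.
  destruct (admissible_fnorm rho eta Ha) as (E & _ & _).
  destruct (Rle_or_lt (fnorm n w rho) (volG n w / 2)) as [Hsmall | Hlarge].
  - apply (admissible_balance_small_side h); auto.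
  - rewrite htilde_sym in Hlt |- *.
    apply (admissible_balance_small_side h); auto; [apply admissible_sym | lra]; auto.
Qed.

Lemma balanced_admissible q : unit_cube n q -> fnorm n w q = volG n w / 2 -> 0 < volG n w ->
  admissible n w q (fcompl q) /\
  htilde n w q (fcompl q) = frac_boundary n w q / (volG n w / 2).
Proof.
  intros Hq HN HD. split; [split; [|split] |].
  - intros u Hu. unfold fcompl. destruct (Hq u Hu). repeat split; lra.
  - lra.
  - rewrite fnorm_fcompl. lra.
  - unfold htilde. rewrite fnorm_fcompl, HN, Rmin_left by lra. reflexivity.
Qed.

Lemma frac_cheeger_approx ht e : is_frac_cheeger_constant n w ht -> 0 < e ->
  exists rho eta, admissible n w rho eta /\ htilde n w rho eta < ht + e.
Proof.
  intros [_ Hsup] He. apply NNPP. intros Hno.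
  assert (ht + e <= ht); [|lra].
  apply Hsup. intros rho eta Ha. apply Rnot_lt_le. intros Hlt. apply Hno. eauto.
Qed.

Lemma frac_cheeger_balanced_lower ht q : is_frac_cheeger_constant n w ht ->
  unit_cube n q -> fnorm n w q = volG n w / 2 -> 0 < volG n w ->
  ht * (volG n w / 2) <= frac_boundary n w q.
Proof.
  intros [Hinf _] Hq HN HD.
  destruct (balanced_admissible q Hq HN HD) as [Ha Hht].
  specialize (Hinf _ _ Ha). rewrite Hht in Hinf.
  apply (Rmult_le_compat_r (volG n w / 2)) in Hinf; [|lra].
  replace (frac_boundary n w q / (volG n w / 2) * (volG n w / 2))
    with (frac_boundary n w q) in Hinf by (field; lra).
  exact Hinf.
Qed.

(* Only partitions with h~ < h_G can be balanced, hence the margin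
   e <= h_G - h~_G. *)
Lemma frac_cheeger_balanced_approx hG ht g :
  (forall A, proper_nonempty n A -> hG <= cheeger_ratio n w A) ->
  is_frac_cheeger_constant n w ht -> ht < hG -> 0 < g ->
  exists q, unit_cube n q /\ fnorm n w q = volG n w / 2 /\
    frac_boundary n w q < ht * (volG n w / 2) + g.
Proof.
  intros Hh Hht Hlt Hg.
  destruct (frac_cheeger_approx ht 1 Hht Rlt_0_1) as (rho0 & eta0 & Ha0 & _).
  assert (HD := volG_pos_of_admissible rho0 eta0 Ha0).
  set (e := Rmin (g / volG n w) (hG - ht)).
  assert (He : 0 < e) by (apply Rmin_glb_lt; [apply Rdiv_lt_0_compat |]; lra).
  assert (Heg : e * volG n w <= g).
  { assert (e <= g / volG n w) by apply Rmin_l.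
    assert (g / volG n w * volG n w = g) by (field; lra). nra. }
  assert (e <= hG - ht) by apply Rmin_r.
  destruct (frac_cheeger_approx ht e Hht He) as (rho & eta & Ha & Happ).
  destruct (admissible_balance hG rho eta Hh Ha) as (q & Hq & HN & HF); [lra|].
  exists q. split; [auto | split; [auto |]].
  assert (htilde n w rho eta * (volG n w / 2) < (ht + e) * (volG n w / 2))
    by (apply Rmult_lt_compat_r; lra).
  lra.
Qed.

End FractionalCheeger.

Theorem mainTheorem11 (n : nat) (w : nat -> nat -> R) (hG ht : R) :
  weighted_graph n w -> loopless n w -> connected n w ->
  is_cheeger_constant n w hG ->
  is_frac_cheeger_constant n w ht ->
  ht < hG ->
  exists rho eta : nat -> R,
    admissible n w rho eta /\
    fnorm n w rho = fnorm n w eta /\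
    htilde n w rho eta = ht.
Proof.
  (* Connectivity only serves to make h_G positive; the argument does not need it. *)
  intros Hw Hl _ [_ Hh] Hht Hlt.
  destruct (frac_cheeger_approx n w ht 1 Hht Rlt_0_1) as (rho0 & eta0 & Ha0 & _).
  assert (HD := volG_pos_of_admissible n w Hw rho0 eta0 Ha0).
  destruct (lipschitz_inf_attained n (frac_boundary n w) (fnorm n w) (volG n w / 2)
              (ht * (volG n w / 2)) (2 * volG n w) (volG n w))
    as (q & Hq & HN & HF); try lra.
  - apply frac_boundary_lipschitz; auto.
  - apply fnorm_lipschitz; auto.
  - intros g Hg. apply (frac_cheeger_balanced_approx n w Hw Hl hG); auto.
  - assert (Hlow := frac_cheeger_balanced_lower n w ht q Hht Hq HN HD).
    destruct (balanced_admissible n w q Hq HN HD) as [Ha Hhq].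
    exists q, (fcompl q). split; [auto | split].
    + rewrite fnorm_fcompl, HN. field.
    + rewrite Hhq. replace (frac_boundary n w q) with (ht * (volG n w / 2)) by lra.
      field. lra.
Qed.
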